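(* Let $\eta_1,\dots,\eta_n$ be admissible measures on $\mathbb R$. For each $i$ let $M_i(dx):=\cosh(x)\,\eta_i(dx)$, let $X_i\sim M_i$ be independent, and $U_i:=\tanh(X_i)\in[-1,1]$. Define $\Psi(y_1,\dots,y_n):=\frac12\big(\prod_{i=1}^n(1+y_i)-\prod_{i=1}^n(1-y_i)\big)$. Then each $M_i$ is a probability measure, $\mathbb E U_i=0$ for every $i$, and \[ T(\eta_1*\cdots*\eta_n)=\mathbb E|\Psi(U_1,\dots,U_n)|. \] Moreover, if $\bar\eta:=\frac1n\sum_i\eta_i$, $\bar M(dx):=\cosh(x)\bar\eta(dx)=\frac1n\sum_iM_i(dx)$, $\bar X\sim\bar M$, $\bar U:=\tanh(\bar X)$, and $\bar U_1,\dots,\bar U_n$ are i.i.d. copies of $\bar U$, then $T(\bar\eta^{*n})=\mathbb E|\Psi(\bar U_1,\dots,\bar U_n)|$, and the law of $\bar U$ is the arithmetic average of the laws of $U_1,\dots,U_n$.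
   Context: A finitely supported positive measure $\eta$ on $\mathbb R$ is called admissible if $\int e^x\,\eta(dx)=\int e^{-x}\,\eta(dx)=1$. $T(\eta):=\frac12\int_{\mathbb R}|e^x-e^{-x}|\,\eta(dx)$. $*$ denotes convolution and $\eta^{*n}$ the $n$-fold self-convolution. *)

From HB Require Import structures.
From mathcomp Require Import all_boot all_order all_algebra.
From mathcomp Require Import all_classical all_reals.
From mathcomp Require Import sequences exp.
Set Implicit Arguments. Unset Strict Implicit. Unset Printing Implicit Defensive.
Import Order.TTheory GRing.Theory Num.Theory.
Local Open Scope ring_scope.
Local Open Scope classical_set_scope.

(* A finitely supported positive measure on R is represented as a finite
   list of atoms (x, w), standing for  sum_k w_k * delta_{x_k}, w_k >= 0. *)
Definition fmeas (R : realType) := seq (R * R).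

Section Defs.
Variable R : realType.

Definition cosh (x : R) : R := (expR x + expR (- x)) / 2.
Definition sinh (x : R) : R := (expR x - expR (- x)) / 2.
Definition tanh (x : R) : R := sinh x / cosh x.

Definition fpos (m : fmeas R) : Prop := forall p, p \in m -> 0 <= p.2.

Definition fint (m : fmeas R) (f : R -> R) : R := \sum_(p <- m) p.2 * f p.1.

Definition fmass (m : fmeas R) (A : set R) : R :=
  \sum_(p <- m) p.2 * (p.1 \in A)%:R.

Definition admissible (m : fmeas R) : Prop :=
  fpos m /\ fint m expR = 1 /\ fint m (fun x => expR (- x)) = 1.

Definition Tfun (m : fmeas R) : R :=
  (1 / 2) * fint m (fun x => `|expR x - expR (- x)|).

Definition fconv (m1 m2 : fmeas R) : fmeas R :=
  [seq (a.1 + b.1, a.2 * b.2) | a <- m1, b <- m2].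

Definition fdirac (x : R) : fmeas R := [:: (x, 1)].

Definition fconv_seq (ms : seq (fmeas R)) : fmeas R := foldr fconv (fdirac 0) ms.

Definition fconv_pow (m : fmeas R) (n : nat) : fmeas R := iter n (fconv m) (fdirac 0).

Definition fscale (c : R) (m : fmeas R) : fmeas R := [seq (p.1, c * p.2) | p <- m].
Definition fsum (ms : seq (fmeas R)) : fmeas R := flatten ms.

Definition coshM (m : fmeas R) : fmeas R := [seq (p.1, cosh p.1 * p.2) | p <- m].

Definition fpush (f : R -> R) (m : fmeas R) : fmeas R := [seq (f p.1, p.2) | p <- m].

Definition fprob (m : fmeas R) : Prop := fpos m /\ fmass m setT = 1.

(* Expectation of F(X_1,...,X_n) where X_1,...,X_n are independent,
   X_i ~ ms_i  (i.e. integral against the product measure). *)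
Fixpoint prodE (ms : seq (fmeas R)) (F : seq R -> R) : R :=
  match ms with
  | [::] => F [::]
  | m :: ms' => \sum_(p <- m) p.2 * prodE ms' (fun ys => F (p.1 :: ys))
  end.

Definition Psi (ys : seq R) : R :=
  (1 / 2) * (\prod_(y <- ys) (1 + y) - \prod_(y <- ys) (1 - y)).

End Defs.

From HB Require Import structures.
From mathcomp Require Import all_boot all_order all_algebra.
From mathcomp Require Import all_classical all_reals.
From mathcomp Require Import sequences exp.
From mathcomp Require Import ring.
Set Implicit Arguments. Unset Strict Implicit. Unset Printing Implicit Defensive.
Import Order.TTheory GRing.Theory Num.Theory.
Local Open Scope ring_scope.
Local Open Scope classical_set_scope.

(* Since e^{+-x} = cosh x (1 +- tanh x), we get
   e^{+-(x_1 + ... + x_n)} = prod_i cosh x_i * prod_i (1 +- tanh x_i), so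
   (1/2)|e^s - e^{-s}| at s = x_1 + ... + x_n equals
   prod_i cosh x_i * |Psi(tanh x_1, ..., tanh x_n)|.  Integrating against
   eta_1 * ... * eta_n, i.e. against the product of the eta_i pushed forward
   by the sum, and absorbing each cosh x_i into eta_i gives the expectation
   under the product of the M_i.  Admissibility says that M_i has mass
   (int e^x + int e^{-x}) / 2 = 1 and that int tanh dM_i = int sinh d eta_i
   = (1 - 1) / 2 = 0.  The statements about the average follow because
   cosh-reweighting and pushforward commute with scaling and summing. *)

Section HyperbolicFunctions.
Variable R : realType.

Lemma cosh_gt0 (x : R) : 0 < cosh x.
Proof. by rewrite /cosh divr_gt0 // addr_gt0 // expR_gt0. Qed.

Lemma cosh_mul_tanh (x : R) : cosh x * tanh x = sinh x.
Proof. by rewrite /tanh mulrC divfK // gt_eqF // cosh_gt0. Qed.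

Lemma cosh_mul_1Dtanh (x : R) : cosh x * (1 + tanh x) = expR x.
Proof. by rewrite mulrDr mulr1 cosh_mul_tanh /cosh /sinh; field. Qed.

Lemma cosh_mul_1Btanh (x : R) : cosh x * (1 - tanh x) = expR (- x).
Proof. by rewrite mulrBr mulr1 cosh_mul_tanh /cosh /sinh; field. Qed.

Lemma prod_cosh_mul_Psi_tanh (xs : seq R) :
  (\prod_(x <- xs) cosh x) * Psi (map (@tanh R) xs)
  = (expR (\sum_(x <- xs) x) - expR (- \sum_(x <- xs) x)) / 2.
Proof.
rewrite /Psi !big_map mulrCA mulrC mul1r -sumrN !expR_sum mulrBr -!big_split /=.
by congr ((_ - _) / 2); apply: eq_bigr => x _;
  rewrite ?cosh_mul_1Dtanh ?cosh_mul_1Btanh.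
Qed.

Lemma half_norm_expRB_sum (xs : seq R) :
  (1 / 2) * `|expR (\sum_(x <- xs) x) - expR (- \sum_(x <- xs) x)|
  = (\prod_(x <- xs) cosh x) * `|Psi (map (@tanh R) xs)|.
Proof.
have cosh_prod_ge0 : 0 <= \prod_(x <- xs) cosh x.
  by apply: prodr_ge0 => x _; exact/ltW/cosh_gt0.
rewrite -(ger0_norm cosh_prod_ge0) -normrM prod_cosh_mul_Psi_tanh.
by rewrite normrM mul1r mulrC [`|2^-1|]ger0_norm // invr_ge0.
Qed.

End HyperbolicFunctions.

Section FiniteMeasures.
Variable R : realType.
Implicit Types (m : fmeas R) (ms : seq (fmeas R)) (f : R -> R).

Lemma fmassE m (A : set R) : fmass m A = fint m (fun x => (x \in A)%:R).
Proof. by []. Qed.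

Lemma eq_fint m f g : f =1 g -> fint m f = fint m g.
Proof. by move=> eq_fg; apply: eq_bigr => p _; rewrite eq_fg. Qed.

Lemma fintD m f g : fint m (fun x => f x + g x) = fint m f + fint m g.
Proof. by rewrite /fint -big_split; apply: eq_bigr => p _; rewrite mulrDr. Qed.

Lemma fintB m f g : fint m (fun x => f x - g x) = fint m f - fint m g.
Proof. by rewrite /fint -sumrB; apply: eq_bigr => p _; rewrite mulrBr. Qed.

Lemma fintMr m f c : fint m (fun x => f x * c) = fint m f * c.
Proof. by rewrite /fint mulr_suml; apply: eq_bigr => p _; rewrite mulrA. Qed.

Lemma fint_fconv m1 m2 f :
  fint (fconv m1 m2) f = fint m1 (fun x => fint m2 (fun y => f (x + y))).
Proof.
rewrite /fint /fconv big_allpairs_dep /=.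
by apply: eq_bigr => a _; rewrite mulr_sumr; apply: eq_bigr => b _; rewrite mulrA.
Qed.

Lemma fint_fconv_seq ms f :
  fint (fconv_seq ms) f = prodE ms (fun xs => f (\sum_(x <- xs) x)).
Proof.
elim: ms f => [|m ms IH] f /=.
  by rewrite /fint big_seq1 big_nil mul1r.
rewrite fint_fconv; apply: eq_bigr => p _; rewrite IH.
by congr (_ * prodE _ _); apply: funext => ys; rewrite big_cons.
Qed.

Lemma fconv_powE m n : fconv_pow m n = fconv_seq (nseq n m).
Proof. by rewrite /fconv_pow /fconv_seq; elim: n => //= n ->. Qed.

Lemma fint_coshM m f : fint (coshM m) f = fint m (fun x => cosh x * f x).
Proof.
by rewrite /fint big_map; apply: eq_bigr => p _ /=; rewrite mulrCA -mulrA.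
Qed.

Lemma fint_fscale_fsum c ms f :
  fint (fscale c (fsum ms)) f = c * \sum_(m <- ms) fint m f.
Proof.
rewrite /fint big_map big_flatten mulr_sumr /=.
by apply: eq_bigr => m _; rewrite mulr_sumr; apply: eq_bigr => p _; rewrite mulrA.
Qed.

Lemma coshM_fscale c m : coshM (fscale c m) = fscale c (coshM m).
Proof. by rewrite /coshM /fscale -!map_comp; apply: eq_map => p /=; rewrite mulrCA. Qed.

Lemma coshM_fsum ms : coshM (fsum ms) = fsum (map (@coshM R) ms).
Proof. exact: map_flatten. Qed.

Lemma fpush_fscale g c m : fpush g (fscale c m) = fscale c (fpush g m).
Proof. by rewrite /fpush /fscale -!map_comp. Qed.

Lemma fpush_fsum g ms : fpush g (fsum ms) = fsum (map (fpush g) ms).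
Proof. exact: map_flatten. Qed.

Lemma fmass_fscale_fsum c ms (A : set R) :
  fmass (fscale c (fsum ms)) A = c * \sum_(m <- ms) fmass m A.
Proof. by rewrite fmassE fint_fscale_fsum. Qed.

Lemma prodE_mull ms c (F : seq R -> R) :
  prodE ms (fun ys => c * F ys) = c * prodE ms F.
Proof.
elim: ms c F => [|m ms IH] c F //=.
by rewrite mulr_sumr; apply: eq_bigr => p _; rewrite IH mulrCA.
Qed.

Lemma prodE_coshM ms (F : seq R -> R) :
  prodE (map (@coshM R) ms) F
  = prodE ms (fun xs => (\prod_(x <- xs) cosh x) * F xs).
Proof.
elim: ms F => [|m ms IH] F /=; first by rewrite big_nil mul1r.
rewrite /coshM big_map; apply: eq_bigr => p _ /=.
rewrite IH (mulrC (cosh _)) -mulrA -prodE_mull.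
by congr (_ * prodE _ _); apply: funext => ys; rewrite big_cons mulrA.
Qed.

End FiniteMeasures.

Section AdmissibleMeasures.
Variable R : realType.
Variable eta : fmeas R.
Hypothesis eta_adm : admissible eta.

Lemma fint_cosh_admissible : fint eta (@cosh R) = 1.
Proof.
case: eta_adm => _ [int_exp int_expN].
by rewrite /cosh fintMr fintD int_exp int_expN; field.
Qed.

Lemma fint_sinh_admissible : fint eta (@sinh R) = 0.
Proof.
case: eta_adm => _ [int_exp int_expN].
by rewrite /sinh fintMr fintB int_exp int_expN subrr mul0r.
Qed.

Lemma coshM_fprob : fprob (coshM eta).
Proof.
case: eta_adm => eta_pos _; split.
  move=> _ /mapP [p p_eta ->] /=.
  exact: mulr_ge0 (ltW (cosh_gt0 _)) (eta_pos p p_eta).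
rewrite fmassE fint_coshM -[RHS]fint_cosh_admissible.
by apply: eq_fint => x; rewrite in_setT mulr1.
Qed.

Lemma fint_coshM_tanh : fint (coshM eta) (@tanh R) = 0.
Proof.
rewrite fint_coshM -[RHS]fint_sinh_admissible.
exact/eq_fint/cosh_mul_tanh.
Qed.

End AdmissibleMeasures.

Lemma Tfun_fconv_seq (R : realType) (ms : seq (fmeas R)) :
  Tfun (fconv_seq ms)
  = prodE (map (@coshM R) ms) (fun xs => `|Psi (map (@tanh R) xs)|).
Proof.
rewrite prodE_coshM /Tfun fint_fconv_seq -prodE_mull.
by congr (prodE _ _); apply: funext => xs; rewrite half_norm_expRB_sum.
Qed.

Theorem lemma1 (R : realType) (etas : seq (fmeas R)) :
  (forall eta, eta \in etas -> admissible eta) ->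
  let n := size etas in
  let Ms := [seq coshM eta | eta <- etas] in
  let etabar := fscale (n%:R)^-1 (fsum etas) in
  let Mbar := coshM etabar in
  (* each M_i is a probability measure and E U_i = 0 *)
  (forall M, M \in Ms -> fprob M) /\
  (forall M, M \in Ms -> fint M (@tanh R) = 0) /\
  (* T(eta_1 * ... * eta_n) = E |Psi(U_1,...,U_n)|, U_i = tanh X_i, X_i ~ M_i indep. *)
  Tfun (fconv_seq etas) = prodE Ms (fun xs => `|Psi (map (@tanh R) xs)|) /\
  (* Mbar = (1/n) sum_i M_i *)
  (forall A : set R, fmass Mbar A = (n%:R)^-1 * \sum_(M <- Ms) fmass M A) /\
  (* T(etabar^{*n}) = E |Psi(Ubar_1,...,Ubar_n)|, Ubar_i i.i.d. copies of tanh(Xbar) *)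
  Tfun (fconv_pow etabar n) = prodE (nseq n Mbar) (fun xs => `|Psi (map (@tanh R) xs)|) /\
  (* law of Ubar is the average of the laws of U_1,...,U_n *)
  (forall A : set R,
     fmass (fpush (@tanh R) Mbar) A
     = (n%:R)^-1 * \sum_(M <- Ms) fmass (fpush (@tanh R) M) A).
Proof.
move=> etas_adm n Ms etabar Mbar.
have MbarE : Mbar = fscale n%:R^-1 (fsum Ms) by rewrite /Mbar coshM_fscale coshM_fsum.
split; first by move=> _ /mapP [eta /etas_adm eta_adm ->]; exact: coshM_fprob.
split; first by move=> _ /mapP [eta /etas_adm eta_adm ->]; exact: fint_coshM_tanh.
split; first exact: Tfun_fconv_seq.
split; first by move=> A; rewrite MbarE fmass_fscale_fsum.
split; first by rewrite fconv_powE Tfun_fconv_seq map_nseq.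
by move=> A; rewrite MbarE fpush_fscale fpush_fsum fmass_fscale_fsum big_map.
Qed.
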